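(* For each $c>0$ let $\alpha_c,\beta_c,\gamma:\mathbb{R}^n\times\mathbb{S}^m\to\mathbb{R}$ satisfy conditions (a)–(e) below, and let $\mathcal{A}_c(x,\Lambda):=f(x)+\alpha_c(x,\Lambda)\,\varphi(G(x),\beta_c(x,\Lambda)\Lambda)+\gamma(x,\Lambda)$ with $\varphi(Y,Z)=\|P(Z/2-Y)\|_F^2-\|Z\|_F^2/4$. Conditions: (a) $\alpha_c,\beta_c,\gamma$ are continuously differentiable for all $c>0$; (b) $\alpha_c(x,\Lambda)>0$ for all $x$ feasible for (NSDP), all $\Lambda$, all $c>0$; and for every KKT pair $(\bar x,\bar\Lambda)$ of (NSDP): (c) $\alpha_c(\bar x,\bar\Lambda)\beta_c(\bar x,\bar\Lambda)=1$ for all $c>0$; (d) $\gamma(\bar x,\bar\Lambda)=0$, $\nabla_x\gamma(\bar x,\bar\Lambda)=0$, $\nabla_\Lambda\gamma(\bar x,\bar\Lambda)=0$; (e) there exist neighborhoods $V_{\bar x}$, $V_{\bar\Lambda}$ of $\bar x,\bar\Lambda$ and a continuous $\Gamma:V_{\bar x}\to V_{\bar\Lambda}$ with $\Gamma(\bar x)=\bar\Lambda$ and $\gamma(x,\Gamma(x))=0$ for all $x\in V_{\bar x}$. Assume moreover that $G_{\mathrm{NSDP}}\neq\emptyset$, that $G_{\mathrm{NLP}}(c)\neq\emptyset$ for all $c>0$, and that for every $x\in G_{\mathrm{NSDP}}$ there is at least one $\Lambda\in\mathbb{S}^m$ such that $(x,\Lambda)$ is a KKT pair of (NSDP). Then for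 every $c>0$, $G_{\mathrm{NLP}}(c)\subseteq\tilde G_{\mathrm{NSDP}}$ implies $G_{\mathrm{NLP}}(c)=\tilde G_{\mathrm{NSDP}}$.
   Context: $\mathbb{S}^m$ is the space of real symmetric $m\times m$ matrices with inner product $\langle Y,Z\rangle=\operatorname{tr}(YZ)$ and Frobenius norm; $\mathbb{S}^m_+$ is the PSD cone and $P$ the orthogonal projection onto it. $f:\mathbb{R}^n\to\mathbb{R}$, $G:\mathbb{R}^n\to\mathbb{S}^m$ are twice continuously differentiable; (NSDP) is: minimize $f(x)$ s.t. $G(x)\in\mathbb{S}^m_+$. $\nabla G(x)^*Z=(\langle\partial G(x)/\partial x_i,Z\rangle)_{i=1}^n$; $L(x,\Lambda)=f(x)-\langle G(x),\Lambda\rangle$. With $Y\circ Z=(YZ+ZY)/2$, $(x,\Lambda)$ is a KKT pair of (NSDP) if $\nabla f(x)-\nabla G(x)^*\Lambda=0$, $\Lambda\circ G(x)=0$, $G(x)\in\mathbb{S}^m_+$, $\Lambda\in\mathbb{S}^m_+$; then $\Lambda$ is called a Lagrange multiplier corresponding to $x$. $G_{\mathrm{NSDP}}$ is the set of global minimizers of (NSDP); $G_{\mathrm{NLP}}(c)$ is the set of global minimizers of $\mathcal{A}_c$ over $\mathbb{R}^n\times\mathbb{S}^m$; $\tilde G_{\mathrm{NSDP}}:=\{(x,\Lambda): x\in G_{\mathrm{NSDP}}\text{ and }\Lambda\text{ is a corresponding Lagrange multiplier}\}$. *)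

From HB Require Import structures.
From mathcomp Require Import all_boot all_order all_algebra.
From mathcomp Require Import all_classical all_reals all_analysis.
Set Implicit Arguments. Unset Strict Implicit. Unset Printing Implicit Defensive.
Import Order.TTheory GRing.Theory Num.Theory.
Import numFieldNormedType.Exports.
Local Open Scope classical_set_scope.
Local Open Scope ring_scope.

Section Defs.
Variable R : realType.

Definition C1 {V W : normedModType R} (f : V -> W) : Prop :=
  (forall x, differentiable f x) /\ (forall v : V, continuous ('D_v f)).

Definition C2 {V W : normedModType R} (f : V -> W) : Prop :=
  C1 f /\ (forall v : V, C1 ('D_v f)).

Variable m : nat.

Definition symmx (A : 'M[R]_m) : Prop := A^T = A.
Definition symz (A : 'M[R]_m) : 'M[R]_m := 2^-1 *: (A + A^T).
Definition mxip (Y Z : 'M[R]_m) : R := \tr (Y *m Z).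
Definition frob2 (Y : 'M[R]_m) : R := \sum_i \sum_j (Y i j) ^+ 2.
Definition psd (A : 'M[R]_m) : Prop :=
  symmx A /\ forall v : 'cV[R]_m, 0 <= (v^T *m A *m v) 0 0.
Definition projPSD (Y : 'M[R]_m) : 'M[R]_m :=
  xget 0 [set Z | psd Z /\ forall W, psd W -> frob2 (Y - Z) <= frob2 (Y - W)].
Definition jprod (Y Z : 'M[R]_m) : 'M[R]_m := 2^-1 *: (Y *m Z + Z *m Y).
Definition phi (Y Z : 'M[R]_m) : R :=
  frob2 (projPSD (2^-1 *: Z - Y)) - frob2 Z / 4.

Variable n : nat.

Definition KKT (f : 'rV[R]_n -> R) (G : 'rV[R]_n -> 'M[R]_m)
    (x : 'rV[R]_n) (L : 'M[R]_m) : Prop :=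
  (forall i : 'I_n,
     'D_(delta_mx 0 i) f x - mxip ('D_(delta_mx 0 i) G x) L = 0)
  /\ jprod L (G x) = 0 /\ psd (G x) /\ psd L.

Definition G_NSDP (f : 'rV[R]_n -> R) (G : 'rV[R]_n -> 'M[R]_m)
  : set 'rV[R]_n :=
  [set x | psd (G x) /\ forall y, psd (G y) -> f x <= f y].

Definition tG_NSDP (f : 'rV[R]_n -> R) (G : 'rV[R]_n -> 'M[R]_m)
  : set ('rV[R]_n * 'M[R]_m) :=
  [set p | G_NSDP f G p.1 /\ KKT f G p.1 p.2].

Definition Ac (f : 'rV[R]_n -> R) (G : 'rV[R]_n -> 'M[R]_m)
    (alpha beta gamma : 'rV[R]_n * 'M[R]_m -> R)
    (p : 'rV[R]_n * 'M[R]_m) : R :=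
  f p.1 + alpha p * phi (G p.1) (beta p *: p.2) + gamma p.

Definition G_NLP (A : 'rV[R]_n * 'M[R]_m -> R)
  : set ('rV[R]_n * 'M[R]_m) :=
  [set p | symmx p.2 /\ forall q, symmx q.2 -> A p <= A q].

(** restriction of a function on R^n x M_m to R^n x S^m, composed with
    the projection onto S^m (used to express smoothness / gradients on
    R^n x S^m). *)
Definition onSym (h : 'rV[R]_n * 'M[R]_m -> R) : 'rV[R]_n * 'M[R]_m -> R :=
  fun p => h (p.1, symz p.2).

End Defs.

From HB Require Import structures.
From mathcomp Require Import all_boot all_order all_algebra.
From mathcomp Require Import all_classical all_reals all_analysis.
From mathcomp Require Import ring lra.
Import Order.TTheory GRing.Theory Num.Theory.
Import numFieldNormedType.Exports.
Local Open Scope classical_set_scope.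
Local Open Scope ring_scope.

(* At a KKT pair (x, L), complementarity gives <G x, L> = 0, and alpha > 0,
   alpha beta = 1 make beta L positive semidefinite.  For PSD Y, P with
   <Y, P> = 0 the projection of P - Y onto the PSD cone is P, by Fejer's theorem
   <Y, W> >= 0 for PSD Y, W; hence phi (G x) (beta L) = 0 and, as gamma vanishes
   there, A_c (x, L) = f x.  So A_c equals the optimal value of (NSDP) on all of
   tilde G_NSDP, and a global minimizer of A_c lying in tilde G_NSDP shows that
   this value is the minimum of A_c.  Fejer's theorem is proved by eliminating
   the rows of one of the matrices one at a time with Schur complements. *)

Section PSDCone.
Variables (R : realType) (m : nat).
Local Notation M := 'M[R]_m.

Definition qform (A : M) (x : 'I_m -> R) : R := \sum_i \sum_j x i * A i j * x j.

Definition frobdot (A B : M) : R := \sum_i \sum_j A i j * B i j.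

Lemma qformE (A : M) (v : 'cV[R]_m) :
  (v^T *m A *m v) 0 0 = qform A (fun i => v i 0).
Proof.
rewrite /qform mxE; under eq_bigr => j _ do rewrite mxE big_distrl /=.
rewrite exchange_big /=; apply: eq_bigr => i _; apply: eq_bigr => j _.
by rewrite mxE.
Qed.

Lemma psd_qform_ge0 {A : M} x : psd A -> 0 <= qform A x.
Proof.
move=> [_ /(_ (\col_i x i))]; rewrite qformE.
by under eq_fun => i do rewrite mxE.
Qed.

Lemma qform_psd (A : M) : symmx A -> (forall x, 0 <= qform A x) -> psd A.
Proof. by move=> sA A_ge0; split => // v; rewrite qformE. Qed.

Lemma symmxE {A : M} i j : symmx A -> A i j = A j i.
Proof. by move=> sA; rewrite -{1}sA mxE. Qed.

Lemma sum_delta_mull p t (F : 'I_m -> R) :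
  \sum_i (if i == p then t else 0) * F i = t * F p.
Proof. by rewrite (bigD1 p) //= eqxx big1 ?addr0 // => i /negbTE ->; rewrite mul0r. Qed.

Lemma sum_delta_mulr p t (F : 'I_m -> R) :
  \sum_i F i * (if i == p then t else 0) = F p * t.
Proof. by rewrite (bigD1 p) //= eqxx big1 ?addr0 // => i /negbTE ->; rewrite mulr0. Qed.

Lemma qform_shift (A : M) x p t : symmx A ->
  qform A (fun i => x i + (if i == p then t else 0)) =
  qform A x + 2 * t * (\sum_j A p j * x j) + t ^+ 2 * A p p.
Proof.
move=> sA; rewrite /qform.
under eq_bigr => i _ do under eq_bigr => j _ do rewrite mulrDr !mulrDl.
under eq_bigr => i _ do rewrite !big_split /=.
rewrite !big_split /=.
have -> : \sum_i \sum_j (if i == p then t else 0) * A i j * x j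
    = t * \sum_j A p j * x j.
  under eq_bigr => i _ do (under eq_bigr => j _ do rewrite -mulrA; rewrite -mulr_sumr).
  by rewrite sum_delta_mull.
have -> : \sum_i \sum_j x i * A i j * (if j == p then t else 0)
    = t * \sum_j A p j * x j.
  under eq_bigr => i _ do rewrite sum_delta_mulr.
  by rewrite mulr_sumr; apply: eq_bigr => i _; rewrite (symmxE i p sA); ring.
have -> : \sum_i \sum_j (if i == p then t else 0) * A i j * (if j == p then t else 0)
    = t ^+ 2 * A p p.
  under eq_bigr => i _ do rewrite sum_delta_mulr -mulrA.
  by rewrite sum_delta_mull; ring.
ring.
Qed.

Lemma psd_diag_ge0 (A : M) p : psd A -> 0 <= A p p.
Proof.
move=> pA; have := psd_qform_ge0 (fun i => 0 + (if i == p then 1 else 0)) pA.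
rewrite qform_shift; last by case: pA.
have -> : qform A (fun _ => 0) = 0.
  by rewrite /qform big1 // => i _; rewrite big1 // => j _; rewrite !mul0r.
by rewrite big1 => [|j _]; [lra | rewrite mulr0].
Qed.

Lemma psd_row_eq0 (A : M) p j : psd A -> A p p = 0 -> A p j = 0.
Proof.
move=> pA App0; have sA : symmx A by case: pA.
set s := \sum_j A p j * A p j.
have s_ge0 : 0 <= s by apply: sumr_ge0 => i _; rewrite -expr2 sqr_ge0.
(* If s > 0, the form at (p-th row) + t e_p is affine in t with slope 2 s. *)
have s_le0 : s <= 0.
  rewrite leNgt; apply/negP => s_gt0.
  pose t := - ((qform A (A p) + 1) / (2 * s)).
  have := psd_qform_ge0 (fun i => A p i + (if i == p then t else 0)) pA.
  rewrite qform_shift // App0 -/s mulr0 addr0.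
  have -> : 2 * t * s = - (qform A (A p) + 1) by rewrite /t; field; rewrite gt_eqF.
  lra.
have s0 : s = 0 by apply/le_anti; rewrite s_le0 s_ge0.
have /psumr_eq0P row0 : \sum_j A p j ^+ 2 = 0.
  by rewrite -[RHS]s0; apply: eq_bigr => i _; rewrite expr2.
by apply/eqP; rewrite -sqrf_eq0; apply/eqP/row0 => // i _; apply: sqr_ge0.
Qed.

Definition schur (A : M) p : M := \matrix_(i, j) (A i j - A i p * A p j / A p p).

Lemma psd_schur (A : M) p : psd A -> 0 < A p p -> psd (schur A p).
Proof.
move=> pA App_gt0; have sA : symmx A by case: pA.
apply: qform_psd.
  by apply/matrixP => i j; rewrite !mxE (symmxE j i sA) (symmxE j p sA) (symmxE p i sA); ring.
move=> x; set s := \sum_j A p j * x j.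
have -> : qform (schur A p) x = qform A x - s * s / A p p.
  have -> : s * s = \sum_i \sum_j (x i * A i p) * (A p j * x j).
    rewrite big_distrl /=; apply: eq_bigr => i _.
    by rewrite /s mulr_sumr (symmxE i p sA) [A p i * _]mulrC.
  rewrite mulr_suml /qform -sumrB; apply: eq_bigr => i _.
  by rewrite mulr_suml -sumrB; apply: eq_bigr => j _; rewrite mxE; ring.
(* Completing the square along the p-th axis. *)
have := psd_qform_ge0 (fun i => x i + (if i == p then - (s / A p p) else 0)) pA.
rewrite qform_shift // -/s.
suff -> : qform A x + 2 * - (s / A p p) * s + (- (s / A p p)) ^+ 2 * A p p
        = qform A x - s * s / A p p by [].
by field; rewrite gt_eqF.
Qed.

Lemma frobdot_schur {A : M} {p : 'I_m} (W : M) : symmx A -> A p p != 0 ->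
  frobdot A W = frobdot (schur A p) W + qform W (fun i => A i p) / A p p.
Proof.
move=> sA App0; rewrite /frobdot /qform mulr_suml -big_split; apply: eq_bigr => i _.
rewrite mulr_suml -big_split; apply: eq_bigr => j _.
by rewrite mxE (symmxE j p sA) /=; field.
Qed.

(* Induction on d: the Schur complement at the pivot d also kills row d, and
   the remaining term of frobdot_schur is nonnegative. *)
Lemma frobdot_psd_ge0_rows d (A W : M) : psd A -> psd W ->
  (forall i j : 'I_m, (d <= i)%N -> A i j = 0) -> 0 <= frobdot A W.
Proof.
elim: d A => [|d IH] A pA pW rowsA.
  by rewrite /frobdot big1 // => i _; rewrite big1 // => j _; rewrite rowsA ?mul0r.
have sA : symmx A by case: pA.
have [d_lt_m|m_le_d] := ltnP d m; last first.
  by apply: IH => // i j d_le_i; have := leq_trans m_le_d d_le_i; rewrite leqNgt ltn_ord.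
pose p := Ordinal d_lt_m.
have [App0|App_neq0] := eqVneq (A p p) 0.
  apply: IH => // i j; rewrite leq_eqVlt => /orP[/eqP dE|]; last exact: rowsA.
  have -> : i = p by apply/val_inj; rewrite /= dE.
  exact: psd_row_eq0.
have App_gt0 : 0 < A p p by rewrite lt_neqAle eq_sym App_neq0 psd_diag_ge0.
rewrite (frobdot_schur W sA App_neq0); apply: addr_ge0.
  apply: IH => // [|i j]; first exact: psd_schur.
  rewrite leq_eqVlt mxE => /orP[/eqP dE|d_lt_i].
    have -> : i = p by apply/val_inj; rewrite /= dE.
    by field.
  by rewrite (rowsA i j) ?(rowsA i p) // !mul0r subr0.
by rewrite divr_ge0 ?psd_qform_ge0 ?ltW.
Qed.

Lemma frobdot_psd_ge0 {A W : M} : psd A -> psd W -> 0 <= frobdot A W.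
Proof. by move=> pA pW; apply: (frobdot_psd_ge0_rows m) => // i j; rewrite leqNgt ltn_ord. Qed.

Lemma frobdotZr (A B : M) c : frobdot A (c *: B) = c * frobdot A B.
Proof.
rewrite /frobdot mulr_sumr; apply: eq_bigr => i _; rewrite mulr_sumr.
by apply: eq_bigr => j _; rewrite mxE; ring.
Qed.

Lemma frobdotC (A B : M) : frobdot A B = frobdot B A.
Proof. by apply: eq_bigr => i _; apply: eq_bigr => j _; rewrite mulrC. Qed.

Lemma frob2_ge0 (A : M) : 0 <= frob2 A.
Proof. by apply: sumr_ge0 => i _; apply: sumr_ge0 => j _; apply: sqr_ge0. Qed.

Lemma frob2_0 : frob2 (0 : M) = 0.
Proof. by rewrite /frob2 big1 // => i _; rewrite big1 // => j _; rewrite mxE expr0n. Qed.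

Lemma frob2_le0 (A : M) : frob2 A <= 0 -> A = 0.
Proof.
move=> A_le0; have /psumr_eq0P rows0 : frob2 A = 0 by apply/le_anti; rewrite A_le0 frob2_ge0.
apply/matrixP => i j; rewrite mxE.
have /psumr_eq0P /(_ j isT) : \sum_j A i j ^+ 2 = 0.
  by apply: rows0 => // k _; apply: sumr_ge0 => l _; apply: sqr_ge0.
by move=> /(_ (fun l _ => sqr_ge0 (A i l))) /eqP; rewrite sqrf_eq0 => /eqP.
Qed.

Lemma frob2Z (A : M) c : frob2 (c *: A) = c ^+ 2 * frob2 A.
Proof.
rewrite /frob2 mulr_sumr; apply: eq_bigr => i _; rewrite mulr_sumr.
by apply: eq_bigr => j _; rewrite mxE; ring.
Qed.

Lemma frob2_subB (P Y W : M) :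
  frob2 (P - Y - W) = frob2 Y + 2 * frobdot Y W - 2 * frobdot Y P + frob2 (W - P).
Proof.
rewrite /frob2 /frobdot !mulr_sumr -big_split -sumrB -big_split; apply: eq_bigr => i _ /=.
rewrite !mulr_sumr -big_split -sumrB -big_split; apply: eq_bigr => j _ /=.
by rewrite !mxE; ring.
Qed.

Lemma psdZ (A : M) c : 0 <= c -> psd A -> psd (c *: A).
Proof.
move=> c_ge0 pA; have sA : symmx A by case: pA.
apply: qform_psd => [|x]; first by apply/matrixP => i j; rewrite !mxE (symmxE i j sA).
have -> : qform (c *: A) x = c * qform A x.
  rewrite /qform mulr_sumr; apply: eq_bigr => i _; rewrite mulr_sumr.
  by apply: eq_bigr => j _; rewrite mxE; ring.
by rewrite mulr_ge0 ?psd_qform_ge0.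
Qed.

(* As <Y, P> = 0, frob2 (P - Y - W) = frob2 Y + 2 <Y, W> + frob2 (W - P), which
   by Fejer is at least frob2 Y, with equality only at W = P. *)
Lemma projPSD_compl (Y P : M) : psd Y -> psd P -> frobdot Y P = 0 ->
  projPSD (P - Y) = P.
Proof.
move=> pY pP YP0.
have distE W : frob2 (P - Y - W) = frob2 Y + 2 * frobdot Y W + frob2 (W - P).
  by rewrite frob2_subB YP0 mulr0 subr0.
have nearest W : psd W -> frob2 (P - Y - P) <= frob2 (P - Y - W).
  move=> pW; rewrite !distE subrr frob2_0 YP0.
  by have := frobdot_psd_ge0 pY pW; have := frob2_ge0 (W - P); lra.
rewrite /projPSD; case: xgetP => [Q _ [pQ Qnearest]|/(_ P)[]]; last by split.
have := Qnearest P pP; rewrite !distE subrr frob2_0 YP0.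
have := frobdot_psd_ge0 pY pQ => YQ_ge0 Q_le.
have /frob2_le0/eqP : frob2 (Q - P) <= 0 by lra.
by rewrite subr_eq0 => /eqP.
Qed.

Lemma phi_compl (Y Z : M) : psd Y -> psd Z -> frobdot Y Z = 0 -> phi Y Z = 0.
Proof.
move=> pY pZ YZ0; rewrite /phi projPSD_compl //.
- by rewrite frob2Z; field.
- by apply: psdZ => //; rewrite invr_ge0.
- by rewrite frobdotZr YZ0 mulr0.
Qed.

Lemma mxip_frobdot (A B : M) : symmx B -> mxip A B = frobdot A B.
Proof.
move=> sB; rewrite /mxip /frobdot /mxtrace; apply: eq_bigr => i _; rewrite mxE.
by apply: eq_bigr => j _; rewrite (symmxE j i sB).
Qed.

Lemma jprod_eq0_mxip (L Y : M) : jprod L Y = 0 -> mxip L Y = 0.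
Proof.
move=> LY0; have : \tr (jprod L Y) = 0 by rewrite LY0 mxtrace0.
by rewrite /jprod mxtraceZ mxtraceD (mxtrace_mulC Y L) /mxip; lra.
Qed.

End PSDCone.

Section MeritFunction.
Context {R : realType} {n m : nat} {f : 'rV[R]_n -> R} {G : 'rV[R]_n -> 'M[R]_m}.

Lemma Ac_KKT (alpha beta gamma : 'rV[R]_n * 'M[R]_m -> R) x L :
  KKT f G x L -> 0 < alpha (x, L) -> alpha (x, L) * beta (x, L) = 1 ->
  gamma (x, L) = 0 -> Ac f G alpha beta gamma (x, L) = f x.
Proof.
move=> [_ [GL0 [pG pL]]] alpha_gt0 alpha_beta gamma0.
have [sG sL] : symmx (G x) /\ symmx L by case: pG; case: pL.
have beta_gt0 : 0 < beta (x, L).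
  by rewrite -(pmulr_rgt0 _ alpha_gt0) alpha_beta.
rewrite /Ac /= gamma0 phi_compl ?mulr0 ?addr0 //; first exact: psdZ (ltW beta_gt0) pL.
by rewrite frobdotZr frobdotC -mxip_frobdot // jprod_eq0_mxip // mulr0.
Qed.

Lemma G_NSDP_f_eq {x y : 'rV[R]_n} : G_NSDP f G x -> G_NSDP f G y -> f x = f y.
Proof. by move=> [pGx minx] [pGy miny]; apply/le_anti; rewrite minx ?miny. Qed.

End MeritFunction.

Theorem lemma3p7 (R : realType) (n m : nat)
  (f : 'rV[R]_n -> R) (G : 'rV[R]_n -> 'M[R]_m)
  (alpha beta : R -> 'rV[R]_n * 'M[R]_m -> R)
  (gamma : 'rV[R]_n * 'M[R]_m -> R) :
  (* standing assumptions: f, G are C^2, G takes values in S^m *)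
  C2 f -> C2 G -> (forall x, symmx (G x)) ->
  (* (a) *)
  (forall c, 0 < c -> C1 (onSym (alpha c)) /\ C1 (onSym (beta c))) ->
  C1 (onSym gamma) ->
  (* (b) *)
  (forall x L c, psd (G x) -> symmx L -> 0 < c -> 0 < alpha c (x, L)) ->
  (* (c)-(e), at every KKT pair *)
  (forall xb Lb, KKT f G xb Lb ->
     (forall c, 0 < c -> alpha c (xb, Lb) * beta c (xb, Lb) = 1)
     /\ gamma (xb, Lb) = 0
     /\ (forall v : 'rV[R]_n, 'D_v (fun x => gamma (x, Lb)) xb = 0)
     /\ (forall H : 'M[R]_m, 'D_H (fun L => gamma (xb, symz L)) Lb = 0)
     /\ (exists (Vx : set 'rV[R]_n) (VL : set 'M[R]_m)
                (Gam : 'rV[R]_n -> 'M[R]_m),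
           nbhs xb Vx /\ nbhs Lb VL /\
           {within Vx, continuous Gam} /\
           (forall x, Vx x -> VL (Gam x) /\ symmx (Gam x)) /\
           Gam xb = Lb /\
           (forall x, Vx x -> gamma (x, Gam x) = 0))) ->
  G_NSDP f G !=set0 ->
  (forall c, 0 < c -> G_NLP (Ac f G (alpha c) (beta c) gamma) !=set0) ->
  (forall x, G_NSDP f G x -> exists L, KKT f G x L) ->
  forall c, 0 < c ->
    G_NLP (Ac f G (alpha c) (beta c) gamma) `<=` tG_NSDP f G ->
    G_NLP (Ac f G (alpha c) (beta c) gamma) = tG_NSDP f G.
Proof.
move=> _ _ _ _ _ alpha_gt0 atKKT _ NLP_neq0 _ c c_gt0 NLP_sub.
have AcE x L : KKT f G x L -> Ac f G (alpha c) (beta c) gamma (x, L) = f x.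
  move=> xL_KKT; have [alpha_beta [gamma0 _]] := atKKT x L xL_KKT.
  have [_ [_ [pG [sL _]]]] := xL_KKT.
  exact: Ac_KKT xL_KKT (alpha_gt0 _ _ _ pG sL c_gt0) (alpha_beta c c_gt0) gamma0.
apply/seteqP; split => // -[x L] [xopt xL_KKT].
have [[x0 L0] x0L0_NLP] := NLP_neq0 c c_gt0.
have [x0opt x0L0_KKT] := NLP_sub _ x0L0_NLP.
have [_ x0L0_min] := x0L0_NLP.
split=> [|q sq]; first by have [_ [_ [_ []]]] := xL_KKT.
by rewrite AcE // (G_NSDP_f_eq xopt x0opt) -(AcE _ _ x0L0_KKT) x0L0_min.
Qed.
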